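(* Let $(C,\chi)$ be a Hopf heap. If a Grunspan map $\vartheta$ for $C$ exists, then necessarily $\vartheta(c)=\sum[c_{(1)},[c_{(4)},c_{(3)},c_{(2)}],c_{(5)}]$ for all $c\in C$; in particular it is unique. Moreover, if $f:C\to D$ is a morphism of Hopf heaps and $C,D$ have Grunspan maps $\vartheta_C,\vartheta_D$, then $f\circ\vartheta_C=\vartheta_D\circ f$.
   Context: Work over a field $\mathbb{F}$; coalgebras are coassociative, counital, nonzero, with Sweedler notation. $C^{\mathrm{co}}$ is the co-opposite coalgebra. A Hopf heap is a coalgebra $C$ with a coalgebra map $\chi:C\otimes C^{\mathrm{co}}\otimes C\to C$, $a\otimes b\otimes c\mapsto[a,b,c]$, such that $[[a,b,c],d,e]=[a,b,[c,d,e]]$ and $\sum[c_{(1)},c_{(2)},a]=\sum[a,c_{(1)},c_{(2)}]=\varepsilon(c)a$ for all $a,b,c,d,e$. A morphism of Hopf heaps $f:C\to D$ is a coalgebra map with $f([a,b,c])=[f(a),f(b),f(c)]$. A Grunspan map is a coalgebra map $\vartheta:C\to C$ with $[[a,b,\vartheta(c)],d,e]=[a,[d,c,b],e]$ for all $a,b,c,d,e\in C$. *)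

From HB Require Import structures.
From mathcomp Require Import all_boot all_algebra.
Set Implicit Arguments. Unset Strict Implicit. Unset Printing Implicit Defensive.
Import GRing.Theory.
Local Open Scope ring_scope.

(* The comultiplication is given in Sweedler form: [cop c] is a finite list of
   pairs (c1, c2) representing the tensor  sum c1 (x) c2  in C (x) C.
   Every statement about tensors is phrased through (multi)linear maps into an
   arbitrary F-vector space W (universal property of the tensor product), so
   only the represented tensor matters, never the particular list. *)

Definition sw (T : Type) (W : nmodType) (s : seq (T * T)) (g : T -> T -> W) : W :=
  \sum_(p <- s) g p.1 p.2.

Section Defs.
Variable F : fieldType.

Definition lin (U W : lmodType F) (f : U -> W) : Prop :=
  forall (a : F) x y, f (a *: x + y) = a *: f x + f y.

Definition linF (U : lmodType F) (f : U -> F) : Prop :=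
  forall (a : F) x y, f (a *: x + y) = a * f x + f y.

Definition bilin (U V W : lmodType F) (B : U -> V -> W) : Prop :=
  (forall y, lin (fun x => B x y)) /\ (forall x, lin (B x)).

Definition trilin (U V X W : lmodType F) (T : U -> V -> X -> W) : Prop :=
  (forall y z, lin (fun x => T x y z)) /\ (forall x z, lin (fun y => T x y z))
  /\ (forall x y, lin (T x y)).

Record is_coalgebra (C : lmodType F) (cop : C -> seq (C * C)) (eps : C -> F) : Prop := {
  cop_lin : forall (W : lmodType F) (B : C -> C -> W), bilin B ->
     forall (a : F) x y, sw (cop (a *: x + y)) B = a *: sw (cop x) B + sw (cop y) B;
  eps_lin : linF eps;
  coassoc : forall (W : lmodType F) (T : C -> C -> C -> W), trilin T -> forall c,
     sw (cop c) (fun x y => sw (cop x) (fun x1 x2 => T x1 x2 y)) =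
     sw (cop c) (fun x y => sw (cop y) (fun y1 y2 => T x y1 y2));
  counit_l : forall c, sw (cop c) (fun x y => eps x *: y) = c;
  counit_r : forall c, sw (cop c) (fun x y => eps y *: x) = c;
  coalg_nonzero : exists c : C, c != 0
}.

Definition coalg_map (C D : lmodType F) (copC : C -> seq (C * C)) (epsC : C -> F)
    (copD : D -> seq (D * D)) (epsD : D -> F) (g : C -> D) : Prop :=
  lin g /\
  (forall (W : lmodType F) (B : D -> D -> W), bilin B -> forall c,
      sw (copD (g c)) B = sw (copC c) (fun x y => B (g x) (g y))) /\
  (forall c, epsD (g c) = epsC c).

(* A linear map C (x) C^co (x) C -> C is a trilinear map; it is a
   coalgebra map iff Delta[a,b,c] = sum [a1,b2,c1] (x) [a2,b1,c2] and
   eps [a,b,c] = eps a eps b eps c. *)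
Definition is_hopf_heap (C : lmodType F) (cop : C -> seq (C * C)) (eps : C -> F)
    (chi : C -> C -> C -> C) : Prop :=
  is_coalgebra cop eps /\
  trilin chi /\
  (forall (W : lmodType F) (B : C -> C -> W), bilin B -> forall a b c,
     sw (cop (chi a b c)) B =
     sw (cop a) (fun a1 a2 => sw (cop b) (fun b1 b2 => sw (cop c) (fun c1 c2 =>
        B (chi a1 b2 c1) (chi a2 b1 c2))))) /\
  (forall a b c, eps (chi a b c) = eps a * eps b * eps c) /\
  (forall a b c d e, chi (chi a b c) d e = chi a b (chi c d e)) /\
  (forall a c, sw (cop c) (fun c1 c2 => chi c1 c2 a) = eps c *: a) /\
  (forall a c, sw (cop c) (fun c1 c2 => chi a c1 c2) = eps c *: a).

Definition heap_morphism (C D : lmodType F)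
    (copC : C -> seq (C * C)) (epsC : C -> F) (chiC : C -> C -> C -> C)
    (copD : D -> seq (D * D)) (epsD : D -> F) (chiD : D -> D -> D -> D)
    (f : C -> D) : Prop :=
  coalg_map copC epsC copD epsD f /\
  (forall a b c, f (chiC a b c) = chiD (f a) (f b) (f c)).

Definition grunspan (C : lmodType F) (cop : C -> seq (C * C)) (eps : C -> F)
    (chi : C -> C -> C -> C) (theta : C -> C) : Prop :=
  coalg_map cop eps cop eps theta /\
  (forall a b c d e, chi (chi a b (theta c)) d e = chi a (chi d c b) e).

(* sum [c1, [c4, c3, c2], c5]  with  c1 (x) ... (x) c5 = Delta^4 c
   (bracketing (id (x) (id (x) (id (x) Delta))) Delta ... ; irrelevant by coassociativity) *)
Definition grunspan_formula (C : lmodType F) (cop : C -> seq (C * C))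
    (chi : C -> C -> C -> C) (c : C) : C :=
  sw (cop c) (fun c1 r => sw (cop r) (fun c2 s => sw (cop s) (fun c3 t =>
    sw (cop t) (fun c4 c5 => chi c1 (chi c4 c3 c2) c5)))).

End Defs.

From mathcomp Require Import all_boot all_algebra.
Set Implicit Arguments. Unset Strict Implicit. Unset Printing Implicit Defensive.
Import GRing.Theory.
Local Open Scope ring_scope.

(* Write Delta^4 c = sum c1 (x) ... (x) c5.  The Grunspan identity
   [[a,b,theta c],d,e] = [a,[d,c,b],e] turns the formula into
     sum [c1,[c4,c3,c2],c5] = sum [[c1,c2,theta c3],c4,c5].
   Two cancellation laws of the heap then collapse the right-hand side:
   - right cancellation: sum [g s1, s2, s3] = g s   (counit on the right),
   - left cancellation:  sum [c1, c2, g c3] = g c   (coassociativity, then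
     sum [x1,x2,y] = eps x y and counit on the left),
   both for any linear g.  Hence theta c equals the formula, which gives
   uniqueness.  For naturality, a heap morphism f pushes the nested Sweedler
   sums defining the formula from C to D (as f is a coalgebra map and all
   nested sums are bilinear in their two tensor legs), so
   f (formula c) = formula (f c), and both sides of f o theta_C = theta_D o f
   are computed by the formula. *)

Section Linearity.
Variable F : fieldType.

Lemma lin0 (U W : lmodType F) (g : U -> W) : lin g -> g 0 = 0.
Proof.
move=> Hg; have e := Hg 1 0 0; rewrite !scale1r addr0 in e.
by apply: (@addrI _ (g 0)); rewrite addr0 -e.
Qed.

Lemma linZ (U W : lmodType F) (g : U -> W) a x : lin g -> g (a *: x) = a *: g x.
Proof. by move=> Hg; have := Hg a x 0; rewrite !addr0 (lin0 Hg) addr0. Qed.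

Lemma linD (U W : lmodType F) (g : U -> W) x y : lin g -> g (x + y) = g x + g y.
Proof. by move=> Hg; have := Hg 1 x y; rewrite !scale1r. Qed.

Lemma lin_comp (U V W : lmodType F) (g : V -> W) (f : U -> V) :
  lin g -> lin f -> lin (fun x => g (f x)).
Proof. by move=> Hg Hf a x y /=; rewrite Hf Hg. Qed.

Lemma eq_sw (T : Type) (W : nmodType) (s : seq (T * T)) (g h : T -> T -> W) :
  (forall x y, g x y = h x y) -> sw s g = sw s h.
Proof. by move=> gh; apply: eq_bigr => p _. Qed.

Lemma lin_sw (U W : lmodType F) (g : U -> W) (T : Type) (s : seq (T * T))
    (h : T -> T -> U) :
  lin g -> g (sw s h) = sw s (fun x y => g (h x y)).
Proof.
move=> Hg; rewrite /sw; elim: s => [|p s IH]; first by rewrite !big_nil (lin0 Hg).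
by rewrite !big_cons (linD _ _ Hg) IH.
Qed.

Lemma sw_lin_fun (U W : lmodType F) (T : Type) (s : seq (T * T))
    (h : U -> T -> T -> W) :
  (forall x y, lin (fun z => h z x y)) -> lin (fun z => sw s (h z)).
Proof.
move=> Hh a x y; rewrite /sw; elim: s => [|p s IH].
  by rewrite !big_nil scaler0 addr0.
rewrite !big_cons IH (Hh p.1 p.2 a x y) scalerDr -!addrA; congr (_ + _).
by rewrite addrCA.
Qed.

End Linearity.

Section CoalgebraSums.
Variables (F : fieldType) (C D : lmodType F).

Lemma sw_cop_bilin (W : lmodType F) (cop : D -> seq (D * D)) (eps : D -> F)
    (G : C -> D -> D -> W) :
  is_coalgebra cop eps ->
  (forall y z, lin (fun x => G x y z)) -> (forall x, bilin (G x)) ->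
  bilin (fun x r => sw (cop r) (G x)).
Proof.
move=> Hco linG bilG; split; first by move=> r; exact: sw_lin_fun.
by move=> x a y z; exact: (cop_lin Hco (bilG x)).
Qed.

Lemma coalg_map_push (copC : C -> seq (C * C)) (epsC : C -> F)
    (copD : D -> seq (D * D)) (epsD : D -> F) (f : C -> D)
    (P : C -> C -> C) (Q : D -> D -> D) c :
  coalg_map copC epsC copD epsD f -> bilin Q ->
  (forall x y, f (P x y) = Q (f x) (f y)) ->
  f (sw (copC c) P) = sw (copD (f c)) Q.
Proof.
move=> [Lf [Tf _]] bilQ fPQ; rewrite (Tf _ _ bilQ) (lin_sw _ _ Lf).
exact: eq_sw.
Qed.

End CoalgebraSums.

Section HeapCancellation.
Variables (F : fieldType) (C : lmodType F) (cop : C -> seq (C * C)) (eps : C -> F)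
  (chi : C -> C -> C -> C).
Hypothesis heap : is_hopf_heap cop eps chi.

Let coalgC : is_coalgebra cop eps := heap.1.
Let chi_trilin : trilin chi := heap.2.1.
Let chi_counit_l : forall a c, sw (cop c) (fun c1 c2 => chi c1 c2 a) = eps c *: a :=
  heap.2.2.2.2.2.1.
Let chi_counit_r : forall a c, sw (cop c) (fun c1 c2 => chi a c1 c2) = eps c *: a :=
  heap.2.2.2.2.2.2.

Lemma heap_cancel_right (g : C -> C) s :
  lin g -> sw (cop s) (fun s1 t => sw (cop t) (fun s2 s3 => chi (g s1) s2 s3)) = g s.
Proof.
move=> Lg; rewrite -{2}(counit_r coalgC s) (lin_sw _ _ Lg).
by apply: eq_sw => s1 t; rewrite chi_counit_r (linZ _ _ Lg).
Qed.

Lemma heap_cancel_left (g : C -> C) c :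
  lin g -> sw (cop c) (fun c1 r => sw (cop r) (fun c2 s => chi c1 c2 (g s))) = g c.
Proof.
move=> Lg; have [L1 [L2 L3]] := chi_trilin.
have Tg : trilin (fun x y z => chi x y (g z)).
  by split=> [y z|]; [exact: L1 | split=> [x z|x y]; [exact: L2 | exact: lin_comp]].
rewrite -(coassoc coalgC Tg c) -{2}(counit_l coalgC c) (lin_sw _ _ Lg).
by apply: eq_sw => x y; rewrite chi_counit_l (linZ _ _ Lg).
Qed.

Lemma grunspan_unique (theta : C -> C) c :
  grunspan cop eps chi theta -> theta c = grunspan_formula cop chi c.
Proof.
move=> [[Ltheta _] grunspan_id]; have [_ [_ L3]] := chi_trilin.
rewrite -(heap_cancel_left c Ltheta); apply: eq_sw => c1 r; apply: eq_sw => c2 s.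
rewrite -(heap_cancel_right s (lin_comp (L3 c1 c2) Ltheta)).
by apply: eq_sw => c3 t; apply: eq_sw => c4 c5; rewrite grunspan_id.
Qed.

End HeapCancellation.

Section Naturality.
Variables (F : fieldType) (C D : lmodType F)
  (copC : C -> seq (C * C)) (epsC : C -> F) (chiC : C -> C -> C -> C)
  (copD : D -> seq (D * D)) (epsD : D -> F) (chiD : D -> D -> D -> D) (f : C -> D).
Hypotheses (coalgD : is_coalgebra copD epsD) (chiD_trilin : trilin chiD).
Hypothesis morph : heap_morphism copC epsC chiC copD epsD chiD f.

Lemma heap_morphism_formula c :
  f (grunspan_formula copC chiC c) = grunspan_formula copD chiD (f c).
Proof.
have [fcoalg f_chi] := morph; have [L1 [L2 L3]] := chiD_trilin.
have B4 X Y Z : bilin (fun c4 c5 => chiD X (chiD c4 Y Z) c5).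
  by split=> [y|x]; [exact: (lin_comp (g := fun u => chiD X u y)) | exact: L3].
have B3 X Z : bilin (fun c3 t => sw (copD t) (fun c4 c5 => chiD X (chiD c4 c3 Z) c5)).
  apply: (sw_cop_bilin coalgD) => // c4 c5.
  exact: (lin_comp (g := fun u => chiD X u c5) (f := fun z => chiD c4 z Z)).
have B2 X : bilin (fun c2 s => sw (copD s) (fun c3 t =>
    sw (copD t) (fun c4 c5 => chiD X (chiD c4 c3 c2) c5))).
  apply: (sw_cop_bilin coalgD) => // c3 t; apply: sw_lin_fun => c4 c5.
  exact: (lin_comp (g := fun u => chiD X u c5) (f := fun z => chiD c4 c3 z)).
have B1 : bilin (fun c1 r => sw (copD r) (fun c2 s => sw (copD s) (fun c3 t =>
    sw (copD t) (fun c4 c5 => chiD c1 (chiD c4 c3 c2) c5)))).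
  apply: (sw_cop_bilin coalgD) => // c2 s; apply: sw_lin_fun => c3 t.
  by apply: sw_lin_fun => c4 c5; exact: L1.
apply: (coalg_map_push _ fcoalg B1) => c1 r.
apply: (coalg_map_push _ fcoalg (B2 _)) => c2 s.
apply: (coalg_map_push _ fcoalg (B3 _ _)) => c3 t.
apply: (coalg_map_push _ fcoalg (B4 _ _ _)) => c4 c5.
by rewrite !f_chi.
Qed.

End Naturality.

Theorem mainTheorem2 (F : fieldType) :
  (forall (C : lmodType F) (cop : C -> seq (C * C)) (eps : C -> F)
          (chi : C -> C -> C -> C) (theta : C -> C),
     is_hopf_heap cop eps chi -> grunspan cop eps chi theta ->
     forall c, theta c = grunspan_formula cop chi c) /\
  (forall (C D : lmodType F)
          (copC : C -> seq (C * C)) (epsC : C -> F) (chiC : C -> C -> C -> C)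
          (copD : D -> seq (D * D)) (epsD : D -> F) (chiD : D -> D -> D -> D)
          (f : C -> D) (thetaC : C -> C) (thetaD : D -> D),
     is_hopf_heap copC epsC chiC -> is_hopf_heap copD epsD chiD ->
     heap_morphism copC epsC chiC copD epsD chiD f ->
     grunspan copC epsC chiC thetaC -> grunspan copD epsD chiD thetaD ->
     forall c, f (thetaC c) = thetaD (f c)).
Proof.
split=> [C cop eps chi theta heap Gtheta c | C D copC epsC chiC copD epsD chiD f
    thetaC thetaD heapC heapD morph GC GD c].
  exact: (grunspan_unique heap c Gtheta).
rewrite (grunspan_unique heapC c GC) (grunspan_unique heapD (f c) GD).
exact: (heap_morphism_formula heapD.1 heapD.2.1 morph).
Qed.
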